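(* Let $(\mathbb{P},\le,f)$ be a forcing property for $\mathcal{L}_A$, $G$ a generic set and $\varphi\in\mathcal{L}_A^s(C)$. Then $\varphi^G=\inf_{p\in G}F^w_p(\varphi)$.
   Context: $\mathcal{L}$ is a countable continuous signature; formulas of $\mathcal{L}_{\omega_1,\omega}$ are built from atomic formulas using $\neg$, $\tfrac12$, $\dotplus$, countable conjunctions $\bigwedge$ and $\inf_x$. $\mathcal{L}_A$ is a countable fragment, $C=\{c_i:i<\omega\}$ new constants, $\mathcal{L}_A(C)$ the smallest countable fragment of $\mathcal{L}_{\omega_1,\omega}(C)$ containing $\mathcal{L}_A$, $\mathcal{L}_A^s(C)$ its sentences, $\mathcal{L}_A^{as}(C)$ its atomic sentences, $\mathcal{T}(C)$ closed terms. A forcing property $(\mathbb{P},\le,f)$: poset with $f_p\colon\mathcal{L}_A^{as}(C)\to[0,1]$ such that (1) $p\le q\Rightarrow f_p\le f_q$; (2) for every $p$, $\varepsilon>0$, $\tau,\sigma\in\mathcal{T}(C)$, atomic $\varphi(x)$ there are $q\le p$, $c\in C$ with $f_q(d(\tau,c))<\varepsilon$, $f_q(d(\tau,\sigma))<f_p(d(\sigma,\tau))+\varepsilon$, and if $f_p(d(\tau,\sigma))<\delta_{\varphi,x}(\varepsilon)$ then $f_q(\varphi(\sigma))<f_p(\varphi(\tau))+\varepsilon$. $F_p$: $f_p$ on atomics; $F_p(\neg\varphi)=1-\inf_{q\le p}F_q(\varphi)$; $F_p(\tfrac12\varphi)=\tfrac12F_p(\varphi)$; $F_p(\varphi\dotplus\psi)=\min(F_p(\varphi)+F_p(\psi),1)$;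 $F_p(\bigwedge\Phi)=\inf_{\varphi\in\Phi}F_p(\varphi)$; $F_p(\inf_x\varphi)=\inf_{c\in C}F_p(\varphi(c))$. Weak forcing: $F^w_p(\varphi)=\sup_{q\le p}\inf_{q'\le q}F_{q'}(\varphi)$. $G\subseteq\mathbb{P}$ is generic if nonempty, downward directed, upward closed, and for every sentence $\varphi$ and $r>1$ some $p\in G$ has $F_p(\varphi)+F_p(\neg\varphi)<r$. $\varphi^G:=\inf_{p\in G}F_p(\varphi)$. *)

From HB Require Import structures.
From mathcomp Require Import all_boot all_order all_algebra.
From mathcomp Require Import boolp classical_sets reals.

Set Implicit Arguments.
Unset Strict Implicit.
Unset Printing Implicit Defensive.

Import Order.TTheory GRing.Theory Num.Theory.
Local Open Scope classical_set_scope.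
Local Open Scope ring_scope.

(* The metric symbol d is built into the syntax.                            *)
Record signature := Signature {
  fsym : countType;
  farity : fsym -> nat;
  rsym : countType;
  rarity : rsym -> nat }.

Section Syntax.
Variable S : signature.

(* Terms of L(C); variables are de Bruijn indices, [tcon i] is the new      *)
(* constant c_i of C = {c_i : i < omega}.                                   *)
Inductive term : Type :=
  | tvar (n : nat)
  | tcon (i : nat)
  | tapp (g : fsym S) (args : 'I_(farity g) -> term).

(* Formulas of L_{omega1,omega}(C): atomic R(t..), d(t,u), negation, 1/2,   *)
(* truncated sum, countable conjunction (a countable family indexed by nat),*)
(* and inf_x (binding de Bruijn index 0).                                   *)
Inductive formula : Type :=
  | fatom (r : rsym S) (args : 'I_(rarity r) -> term)
  | fdist (t u : term)
  | fneg (phi : formula)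
  | fhalf (phi : formula)
  | fplus (phi psi : formula)
  | fconj (Phi : nat -> formula)
  | finf (phi : formula).

Fixpoint tsubst (s : nat -> term) (t : term) : term :=
  match t with
  | tvar n => s n
  | tcon i => tcon i
  | tapp g a => tapp (fun k => tsubst s (a k))
  end.

Definition scons (t : term) (s : nat -> term) : nat -> term :=
  fun n => match n with 0 => t | n'.+1 => s n' end.

Definition tshift (t : term) : term := tsubst (fun n => tvar n.+1) t.

Definition up (s : nat -> term) : nat -> term := scons (tvar 0) (fun n => tshift (s n)).

Fixpoint fsubst (s : nat -> term) (phi : formula) : formula :=
  match phi with
  | fatom r a => fatom (fun k => tsubst s (a k))
  | fdist t u => fdist (tsubst s t) (tsubst s u)
  | fneg phi => fneg (fsubst s phi)
  | fhalf phi => fhalf (fsubst s phi)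
  | fplus phi psi => fplus (fsubst s phi) (fsubst s psi)
  | fconj Phi => fconj (fun n => fsubst s (Phi n))
  | finf phi => finf (fsubst (up s) phi)
  end.

(* phi(t): substitute t for the free variable x (= index 0) *)
Definition inst (phi : formula) (t : term) : formula := fsubst (scons t tvar) phi.

Fixpoint tclosed (k : nat) (t : term) : Prop :=
  match t with
  | tvar n => (n < k)%N
  | tcon _ => True
  | tapp g a => forall j, tclosed k (a j)
  end.

Fixpoint fclosed (k : nat) (phi : formula) : Prop :=
  match phi with
  | fatom r a => forall j, tclosed k (a j)
  | fdist t u => tclosed k t /\ tclosed k u
  | fneg phi | fhalf phi => fclosed k phi
  | fplus phi psi => fclosed k phi /\ fclosed k psi
  | fconj Phi => forall n, fclosed k (Phi n)
  | finf phi => fclosed k.+1 phi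
  end.

Fixpoint tnoC (t : term) : Prop :=
  match t with
  | tvar _ => True
  | tcon _ => False
  | tapp g a => forall j, tnoC (a j)
  end.

Fixpoint fnoC (phi : formula) : Prop :=
  match phi with
  | fatom r a => forall j, tnoC (a j)
  | fdist t u => tnoC t /\ tnoC u
  | fneg phi | fhalf phi => fnoC phi
  | fplus phi psi => fnoC phi /\ fnoC psi
  | fconj Phi => forall n, fnoC (Phi n)
  | finf phi => fnoC phi
  end.

Fixpoint finitary (phi : formula) : Prop :=
  match phi with
  | fatom _ _ | fdist _ _ => True
  | fneg phi | fhalf phi | finf phi => finitary phi
  | fplus phi psi => finitary phi /\ finitary psi
  | fconj _ => False
  end.

Definition is_atomic (phi : formula) : Prop :=
  match phi with fatom _ _ | fdist _ _ => True | _ => False end.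

Definition sentence (phi : formula) : Prop := fclosed 0 phi.

(* Language membership: withC = false means L (no constants of C),        *)
(* withC = true means L(C).                                               *)
Definition in_langT (withC : bool) (t : term) : Prop := withC \/ tnoC t.
Definition in_lang (withC : bool) (phi : formula) : Prop := withC \/ fnoC phi.

Record countable_fragment (withC : bool) (A : formula -> Prop) : Prop := {
  frag_lang : forall phi, A phi -> in_lang withC phi;
  frag_countable : exists e : nat -> formula, forall phi, A phi -> exists n, e n = phi;
  frag_finitary : forall phi, finitary phi -> in_lang withC phi -> A phi;
  frag_neg : forall phi, A phi -> A (fneg phi);
  frag_half : forall phi, A phi -> A (fhalf phi);
  frag_plus : forall phi psi, A phi -> A psi -> A (fplus phi psi);
  frag_inf : forall phi, A phi -> A (finf phi);
  frag_sub_neg : forall phi, A (fneg phi) -> A phi;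
  frag_sub_half : forall phi, A (fhalf phi) -> A phi;
  frag_sub_plus : forall phi psi, A (fplus phi psi) -> A phi /\ A psi;
  frag_sub_conj : forall Phi, A (fconj Phi) -> forall n, A (Phi n);
  frag_sub_inf : forall phi, A (finf phi) -> A phi;
  frag_subst : forall phi (s : nat -> term),
      A phi -> (forall n, in_langT withC (s n)) -> A (fsubst s phi) }.

Definition LAC (LA : formula -> Prop) (phi : formula) : Prop :=
  forall A, countable_fragment true A -> (forall psi, LA psi -> A psi) -> A phi.

Definition LAs (LA : formula -> Prop) (phi : formula) : Prop :=
  LAC LA phi /\ sentence phi.
Definition LAas (LA : formula -> Prop) (phi : formula) : Prop :=
  LAC LA phi /\ sentence phi /\ is_atomic phi.

Definition closed_term (t : term) : Prop := tclosed 0 t.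

End Syntax.

Arguments tvar {S}.
Arguments tcon {S}.

Section Forcing.
Variables (R : realType) (S : signature) (LA : formula S -> Prop).
(* delta phi = delta_{phi,x}, the modulus of uniform continuity of the      *)
(* atomic formula phi(x) in its variable x                                  *)
Variable delta : formula S -> R -> R.
Variables (P : Type) (le : P -> P -> Prop) (f : P -> formula S -> R).

Record forcing_property : Prop := {
  fp_refl : forall p, le p p;
  fp_trans : forall p q r, le p q -> le q r -> le p r;
  fp_antisym : forall p q, le p q -> le q p -> p = q;
  fp_range : forall p a, LAas LA a -> 0 <= f p a <= 1;
  fp_mono : forall p q a, LAas LA a -> le p q -> f p a <= f q a;
  fp_dense : forall p (eps : R) (tau sigma : term S) (phi : formula S),
      0 < eps -> closed_term tau -> closed_term sigma ->
      is_atomic phi -> fclosed 1 phi -> LAC LA phi ->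
      exists q, exists c : nat,
        le q p /\
        f q (fdist tau (tcon c)) < eps /\
        f q (fdist tau sigma) < f p (fdist sigma tau) + eps /\
        (f p (fdist tau sigma) < delta phi eps ->
           f q (inst phi sigma) < f p (inst phi tau) + eps) }.

Definition below (p : P) : set P := [set q | le q p].

(* F evaluated under an environment rho of closed terms for the free       *)
(* variables; on a sentence phi, F_p(phi) := Fenv phi tvar p.  In the       *)
(* inf_x clause, Fenv phi (c .: rho) is F_p of phi(c).                      *)
Fixpoint Fenv (phi : formula S) (rho : nat -> term S) : P -> R :=
  match phi with
  | fatom r a => fun p => f p (fatom (fun k => tsubst rho (a k)))
  | fdist t u => fun p => f p (fdist (tsubst rho t) (tsubst rho u))
  | fneg phi => fun p => 1 - inf [set Fenv phi rho q | q in below p]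
  | fhalf phi => fun p => Fenv phi rho p / 2
  | fplus phi psi => fun p => Num.min (Fenv phi rho p + Fenv psi rho p) 1
  | fconj Phi => fun p => inf [set Fenv (Phi n) rho p | n in [set: nat]]
  | finf phi => fun p => inf [set Fenv phi (scons (tcon c) rho) p | c in [set: nat]]
  end.

Definition F (p : P) (phi : formula S) : R := Fenv phi tvar p.

Definition Fw (p : P) (phi : formula S) : R :=
  sup [set inf [set F q' phi | q' in below q] | q in below p].

Definition generic (G : set P) : Prop :=
  (exists p, G p) /\
  (forall p q, G p -> G q -> exists r, G r /\ le r p /\ le r q) /\
  (forall p q, G p -> le p q -> G q) /\
  (forall phi (r : R), LAs LA phi -> 1 < r ->
     exists p, G p /\ F p phi + F p (fneg phi) < r).

Definition valG (G : set P) (phi : formula S) : R := inf [set F p phi | p in G].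

End Forcing.

(* Ordinary forcing is monotone: F_q(psi) <= F_p(psi) for q <= p, by induction on psi.
   Hence F^w_p(phi) <= F_p(phi), which gives one inequality.  Conversely, genericity
   yields r in G with F_r(phi) + F_r(~phi) < 1 + e, i.e. F_r(phi) is within e of
   inf_{q <= r} F_q(phi); for p in G pick s in G below p and r, and then
   phi^G <= F_s(phi) <= F_r(phi) < inf_{q <= r} F_q(phi) + e
        <= inf_{q <= s} F_q(phi) + e <= F^w_p(phi) + e. *)
From Pilot Require Import Defs.
From HB Require Import structures.
From mathcomp Require Import all_boot all_order all_algebra.
From mathcomp Require Import boolp classical_sets reals lra.
Set Implicit Arguments.
Unset Strict Implicit.
Unset Printing Implicit Defensive.

Import Order.TTheory GRing.Theory Num.Theory.
Local Open Scope classical_set_scope.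
Local Open Scope ring_scope.

Section RealInf.
Variable R : realType.
Implicit Types (A B E : set R).

Lemma inf_le_of_ge0 {E x} : (forall z, E z -> 0 <= z) -> E x -> inf E <= x.
Proof. by move=> E_ge0; apply: ge_inf; exists 0. Qed.

Lemma inf_in01 E : E !=set0 -> (forall z, E z -> 0 <= z <= 1) -> 0 <= inf E <= 1.
Proof.
move=> [x Ex] E01; have E_ge0 z : E z -> 0 <= z by case/E01/andP.
apply/andP; split; first by apply: lb_le_inf; [exists x |].
have /andP[_ x_le1] := E01 x Ex; exact: le_trans (inf_le_of_ge0 E_ge0 Ex) x_le1.
Qed.

Lemma le_inf_subset A B : B !=set0 -> has_lbound A -> B `<=` A -> inf A <= inf B.
Proof. by move=> B0 lbA BA; apply: lb_le_inf => // x /BA; apply: ge_inf. Qed.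

Lemma le_inf_image (T : Type) (D : set T) (g h : T -> R) :
  D !=set0 -> has_lbound [set g x | x in D] -> (forall x, D x -> g x <= h x) ->
  inf [set g x | x in D] <= inf [set h x | x in D].
Proof.
move=> [x Dx] lbg gh; apply: lb_le_inf; first by exists (h x), x.
by move=> _ [y Dy <-]; apply: le_trans (gh y Dy); apply: ge_inf => //; exists y.
Qed.

End RealInf.

Section Syntax.
Variable S : signature.
Implicit Types (t : term S) (rho : nat -> term S) (LA : formula S -> Prop).

Definition closed_env (k : nat) rho := forall n, (n < k)%N -> closed_term (rho n).

Lemma closed_env0 : closed_env 0 tvar.
Proof. by []. Qed.

Lemma closed_env_scons k rho c : closed_env k rho -> closed_env k.+1 (scons (tcon c) rho).
Proof. by move=> rho_cl [|n] //= /rho_cl. Qed.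

Lemma tsubst_closed k rho t : tclosed k t -> closed_env k rho -> closed_term (tsubst rho t).
Proof.
elim: t => [n|i|g a IH] /= t_cl rho_cl //; first exact: rho_cl.
by move=> j; apply: IH (t_cl j) rho_cl.
Qed.

Lemma LAC_closed LA phi psi :
  (forall A, countable_fragment true A -> A phi -> A psi) -> LAC LA phi -> LAC LA psi.
Proof. by move=> frag_phi_psi LAphi A fragA LA_A; apply: frag_phi_psi (LAphi A fragA LA_A). Qed.

Lemma LAC_sub_neg LA phi : LAC LA (fneg phi) -> LAC LA phi.
Proof. exact: LAC_closed (fun _ fragA => @frag_sub_neg _ _ _ fragA phi). Qed.

Lemma LAC_sub_half LA phi : LAC LA (fhalf phi) -> LAC LA phi.
Proof. exact: LAC_closed (fun _ fragA => @frag_sub_half _ _ _ fragA phi). Qed.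

Lemma LAC_sub_plusl LA phi psi : LAC LA (fplus phi psi) -> LAC LA phi.
Proof. exact: LAC_closed (fun _ fragA HA => (@frag_sub_plus _ _ _ fragA phi psi HA).1). Qed.

Lemma LAC_sub_plusr LA phi psi : LAC LA (fplus phi psi) -> LAC LA psi.
Proof. exact: LAC_closed (fun _ fragA HA => (@frag_sub_plus _ _ _ fragA phi psi HA).2). Qed.

Lemma LAC_sub_conj LA Phi n : LAC LA (fconj Phi) -> LAC LA (Phi n).
Proof. exact: LAC_closed (fun _ fragA HA => @frag_sub_conj _ _ _ fragA Phi HA n). Qed.

Lemma LAC_sub_inf LA phi : LAC LA (finf phi) -> LAC LA phi.
Proof. exact: LAC_closed (fun _ fragA => @frag_sub_inf _ _ _ fragA phi). Qed.

Lemma LAas_fsubst LA k rho phi :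
  is_atomic phi -> LAC LA phi -> Defs.fclosed k phi -> closed_env k rho ->
  LAas LA (fsubst rho phi).
Proof.
move=> at_phi LAphi phi_cl rho_cl; split.
  apply: LAC_closed LAphi => A fragA Aphi.
  by apply: (frag_subst (s := rho) fragA Aphi) => n; left.
case: phi at_phi {LAphi} phi_cl => //= [r a _ a_cl | t u _ [t_cl u_cl]].
  by split=> // j; apply: tsubst_closed rho_cl.
by split; split; apply: tsubst_closed rho_cl.
Qed.

End Syntax.

Arguments closed_env0 {S}.

Section Forcing.
Variables (R : realType) (S : signature) (LA : formula S -> Prop).
Variable delta : formula S -> R -> R.
Variables (P : Type) (le : P -> P -> Prop) (f : P -> formula S -> R).
Hypothesis FP : forcing_property LA delta le f.

Local Notation Fenv := (Fenv le f).
Local Notation F := (F le f).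
Local Notation Fw := (Fw le f).
Local Notation below := (below le).

Lemma below_refl p : below p p.
Proof. exact: fp_refl FP p. Qed.

Lemma Fenv_in01 phi k rho p :
  LAC LA phi -> Defs.fclosed k phi -> closed_env k rho -> 0 <= Fenv phi rho p <= 1.
Proof.
elim: phi k rho p => [r a|t u|phi IH|phi IH|phi IH psi IH'|Phi IH|phi IH] k rho p
  LAphi phi_cl rho_cl /=.
- exact: (fp_range FP) (@LAas_fsubst _ _ _ _ (fatom a) I LAphi phi_cl rho_cl).
- exact: (fp_range FP) (@LAas_fsubst _ _ _ _ (fdist t u) I LAphi phi_cl rho_cl).
- have /andP[] : 0 <= inf [set Fenv phi rho q | q in below p] <= 1.
    apply: inf_in01 => [|_ [q _ <-]]; last exact: IH (LAC_sub_neg LAphi) phi_cl rho_cl.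
    by exists (Fenv phi rho p), p => //; apply: below_refl.
  move=> ? ?; apply/andP; split; lra.
- have /andP[] := IH k rho p (LAC_sub_half LAphi) phi_cl rho_cl.
  by move=> ? ?; apply/andP; split; lra.
- have /andP[? ?] := IH k rho p (LAC_sub_plusl LAphi) phi_cl.1 rho_cl.
  have /andP[? ?] := IH' k rho p (LAC_sub_plusr LAphi) phi_cl.2 rho_cl.
  by rewrite ge_min le_min lexx orbT ler01 andbT addr_ge0.
- apply: inf_in01 => [|_ [n _ <-]]; first by exists (Fenv (Phi 0%N) rho p), 0%N.
  by apply: IH rho_cl => //; apply: LAC_sub_conj LAphi.
- apply: inf_in01 => [|_ [c _ <-]]; first by exists (Fenv phi (scons (tcon 0%N) rho) p), 0%N.
  exact: IH (LAC_sub_inf LAphi) phi_cl (closed_env_scons _ rho_cl).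
Qed.

Lemma has_lbound_Fenv_image phi k rho (D : set P) :
  LAC LA phi -> Defs.fclosed k phi -> closed_env k rho ->
  has_lbound [set Fenv phi rho q | q in D].
Proof.
move=> LAphi phi_cl rho_cl; exists 0 => _ [q _ <-].
by case/andP: (Fenv_in01 q LAphi phi_cl rho_cl).
Qed.

Lemma le_Fenv phi k rho p q :
  LAC LA phi -> Defs.fclosed k phi -> closed_env k rho -> le q p ->
  Fenv phi rho q <= Fenv phi rho p.
Proof.
elim: phi k rho p q => [r a|t u|phi IH|phi IH|phi IH psi IH'|Phi IH|phi IH] k rho p q
  LAphi phi_cl rho_cl le_qp /=.
- exact: (fp_mono FP) (@LAas_fsubst _ _ _ _ (fatom a) I LAphi phi_cl rho_cl) le_qp.
- exact: (fp_mono FP) (@LAas_fsubst _ _ _ _ (fdist t u) I LAphi phi_cl rho_cl) le_qp.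
- rewrite lerD2l lerN2; apply: le_inf_subset.
  + by exists (Fenv phi rho q), q => //; apply: below_refl.
  + exact: has_lbound_Fenv_image (LAC_sub_neg LAphi) phi_cl rho_cl.
  + by move=> _ [r le_rq <-]; exists r => //; apply: (fp_trans FP) le_rq le_qp.
- by rewrite ler_pM2r ?invr_gt0 //; apply: IH (LAC_sub_half LAphi) phi_cl rho_cl le_qp.
- rewrite le_min !ge_min lexx orbT andbT; apply/orP; left.
  by apply: lerD; [apply: IH (LAC_sub_plusl LAphi) phi_cl.1 rho_cl le_qp
                  |apply: IH' (LAC_sub_plusr LAphi) phi_cl.2 rho_cl le_qp].
- apply: le_inf_image; first by exists 0%N.
    exists 0 => _ [n _ <-].
    by case/andP: (Fenv_in01 q (LAC_sub_conj n LAphi) (phi_cl n) rho_cl).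
  by move=> n _; apply: IH (LAC_sub_conj n LAphi) (phi_cl n) rho_cl le_qp.
- apply: le_inf_image; first by exists 0%N.
    exists 0 => _ [c _ <-].
    by case/andP: (Fenv_in01 q (LAC_sub_inf LAphi) phi_cl (closed_env_scons c rho_cl)).
  by move=> c _; apply: IH (LAC_sub_inf LAphi) phi_cl (closed_env_scons c rho_cl) le_qp.
Qed.

Definition Finf_below p phi := inf [set F q phi | q in below p].

Lemma F_fneg p phi : F p (fneg phi) = 1 - Finf_below p phi.
Proof. by []. Qed.

Lemma Fw_Finf_below p phi : Fw p phi = sup [set Finf_below q phi | q in below p].
Proof. by []. Qed.

Section Sentence.
Variable phi : formula S.
Hypothesis phi_LAs : LAs LA phi.

Lemma F_in01 p : 0 <= F p phi <= 1.
Proof. exact: Fenv_in01 p phi_LAs.1 phi_LAs.2 closed_env0. Qed.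

Lemma le_F p q : le q p -> F q phi <= F p phi.
Proof. exact: le_Fenv phi_LAs.1 phi_LAs.2 closed_env0. Qed.

Lemma F_ge0 p : 0 <= F p phi.
Proof. by case/andP: (F_in01 p). Qed.

Lemma Finf_below_in01 p : 0 <= Finf_below p phi <= 1.
Proof.
apply: inf_in01 => [|_ [q _ <-]]; last exact: F_in01.
by exists (F p phi), p => //; apply: below_refl.
Qed.

Lemma Finf_below_le_F p : Finf_below p phi <= F p phi.
Proof.
apply: inf_le_of_ge0 => [_ [q _ <-]|]; first exact: F_ge0.
by exists p => //; apply: below_refl.
Qed.

Lemma le_Finf_below p q : le q p -> Finf_below p phi <= Finf_below q phi.
Proof.
move=> le_qp; apply: le_inf_subset.
- by exists (F q phi), q => //; apply: below_refl.
- by exists 0 => _ [r _ <-]; apply: F_ge0.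
- by move=> _ [r le_rq <-]; exists r => //; apply: (fp_trans FP) le_rq le_qp.
Qed.

Lemma Finf_below_le_Fw p q : le q p -> Finf_below q phi <= Fw p phi.
Proof.
move=> le_qp; rewrite Fw_Finf_below; apply: ub_le_sup; last by exists q.
by exists 1 => _ [r _ <-]; case/andP: (Finf_below_in01 r).
Qed.

Lemma Fw_le_F p : Fw p phi <= F p phi.
Proof.
rewrite Fw_Finf_below; apply: ge_sup => [|_ [q le_qp <-]].
  by exists (Finf_below p phi), p => //; apply: below_refl.
exact: le_trans (Finf_below_le_F q) (le_F le_qp).
Qed.

Lemma Fw_ge0 p : 0 <= Fw p phi.
Proof.
have /andP[ge0 _] := Finf_below_in01 p.
exact: le_trans ge0 (Finf_below_le_Fw (below_refl p)).
Qed.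

Variable G : set P.
Hypothesis G_generic : generic LA le f G.

Lemma generic_approx e : 0 < e -> exists2 r, G r & F r phi < Finf_below r phi + e.
Proof.
move=> e_gt0; have [_ [_ [_ decide]]] := G_generic.
have [r [Gr]] := decide phi (1 + e) phi_LAs ltac:(by rewrite ltrDl).
by rewrite F_fneg => decided; exists r => //; lra.
Qed.

Lemma valG_le_F p : G p -> valG le f G phi <= F p phi.
Proof. by move=> Gp; apply: inf_le_of_ge0 => [_ [q _ <-]|]; [apply: F_ge0 | exists p]. Qed.

Lemma valG_le_Fw p : G p -> valG le f G phi <= Fw p phi.
Proof.
move=> Gp; apply/ler_addgt0Pr => e e_gt0.
have [r Gr F_r_approx] := generic_approx e_gt0.
have [_ [directed _]] := G_generic.
have [s [Gs [le_sp le_sr]]] := directed p r Gp Gr.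
have := valG_le_F Gs; have := le_F le_sr; have := le_Finf_below le_sr.
have := Finf_below_le_Fw le_sp; lra.
Qed.

Lemma valG_eq_inf_Fw : valG le f G phi = inf [set Fw p phi | p in G].
Proof.
have [[p0 Gp0] _] := G_generic.
apply/le_anti/andP; split.
- apply: lb_le_inf => [|_ [p Gp <-]]; first by exists (Fw p0 phi), p0.
  exact: valG_le_Fw.
- apply: lb_le_inf => [|_ [p Gp <-]]; first by exists (F p0 phi), p0.
  apply: le_trans (Fw_le_F p).
  by apply: inf_le_of_ge0 => [_ [q _ <-]|]; [apply: Fw_ge0 | exists p].
Qed.

End Sentence.
End Forcing.

Theorem lemma2p13 (R : realType) (S : signature) (LA : formula S -> Prop)
    (delta : formula S -> R -> R)
    (P : Type) (le : P -> P -> Prop) (f : P -> formula S -> R)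
    (G : set P) (phi : formula S) :
  countable_fragment false LA ->
  (forall psi (eps : R), 0 < eps -> 0 < delta psi eps) ->
  forcing_property LA delta le f ->
  generic LA le f G ->
  LAs LA phi ->
  valG le f G phi = inf [set Fw le f p phi | p in G].
Proof.
move=> _ _ FP G_generic phi_LAs; exact: (valG_eq_inf_Fw FP phi_LAs G_generic).
Qed.
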